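(* Let $\mathbb Z^\infty=\bigoplus_{\mathbb N}\mathbb Z$ and, for a weight function $w:\mathbb N\to\mathbb R_{>0}$, let $d_w(x,y)=\sum_{j\ge0}w(j)|x_j-y_j|$. Then $(\mathbb Z^\infty,d_{w_1})$ with $w_1(n)=n+1$ and $(\mathbb Z^\infty,d_{w_2})$ with $w_2(n)=1$ are not coarsely equivalent: there are no coarse maps $f:(\mathbb Z^\infty,d_{w_1})\to(\mathbb Z^\infty,d_{w_2})$ and $g:(\mathbb Z^\infty,d_{w_2})\to(\mathbb Z^\infty,d_{w_1})$ such that $g\circ f$ is close to the identity of $\mathbb Z^\infty$ and $f\circ g$ is close to the identity of $\mathbb Z^\infty$.
   Context: $\mathbb Z^\infty$ is the set of integer sequences $(x_0,x_1,\dots)$ with only finitely many nonzero entries. A map $f:(X,d_X)\to(Y,d_Y)$ between metric spaces is coarse if it is uniformly expansive (for every $R>0$ there is $S>0$ with $d_Y(fx,fx')\le S$ whenever $d_X(x,x')\le R$) and metrically proper (preimages of bounded sets are bounded). Two maps $f,f':X\to Y$ are close if $\sup_{x}d_Y(fx,f'x)<\infty$. *)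

From HB Require Import structures.
From mathcomp Require Import all_boot all_order all_algebra.
Set Implicit Arguments. Unset Strict Implicit. Unset Printing Implicit Defensive.
Import Order.TTheory GRing.Theory Num.Theory.
Local Open Scope ring_scope.

(* Z^infty = finitely supported integer sequences, represented canonically
   as finite lists of integers with no trailing zeros
   (x_j = nth 0 s j; the empty list is the zero sequence). *)
Definition Zinf := {s : seq int | last 1 s != 0}.

Definition coord (x : Zinf) (j : nat) : int := nth 0 (val x) j.

(* Weighted l^1 metric d_w(x,y) = sum_j w(j) |x_j - y_j|; the sum is finite
   since coordinates beyond both supports vanish. *)
Definition dw (w : nat -> int) (x y : Zinf) : int :=
  \sum_(j < maxn (size (val x)) (size (val y))) w j * `|coord x j - coord y j|.

Definition w1 (n : nat) : int := (n.+1)%:Z.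
Definition w2 (n : nat) : int := 1.

Definition d1 := dw w1.
Definition d2 := dw w2.

Definition bounded (T : Type) (d : T -> T -> int) (B : T -> Prop) : Prop :=
  exists (c : T) (r : int), forall y, B y -> d c y <= r.

Definition uniformly_expansive (X Y : Type) (dX : X -> X -> int) (dY : Y -> Y -> int)
  (f : X -> Y) : Prop :=
  forall R : int, exists S : int, forall x x', dX x x' <= R -> dY (f x) (f x') <= S.

Definition metrically_proper (X Y : Type) (dX : X -> X -> int) (dY : Y -> Y -> int)
  (f : X -> Y) : Prop :=
  forall B : Y -> Prop, bounded dY B -> bounded dX (fun x => B (f x)).

Definition coarse (X Y : Type) (dX : X -> X -> int) (dY : Y -> Y -> int)
  (f : X -> Y) : Prop :=
  uniformly_expansive dX dY f /\ metrically_proper dX dY f.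

Definition close (X Y : Type) (dY : Y -> Y -> int) (f f' : X -> Y) : Prop :=
  exists C : int, forall x, dY (f x) (f' x) <= C.

(* Since w_1 grows, a d_1-ball of radius s is finite: its points agree with
   the centre from coordinate s on and differ from it by at most s before.
   The spikes (n + 1) e_j, j in N, all lie in the d_2-ball of radius n + 1
   about 0, so a uniformly expansive g : (Z^oo, d_2) -> (Z^oo, d_1) sends them
   into a d_1-ball and hence identifies two distinct spikes.  These are at
   d_2-distance at least n + 1, but if f o g is C-close to the identity they
   are within 2C of each other; n = 2|C| gives a contradiction. *)

From Pilot Require Import Defs.
From mathcomp Require Import all_boot all_order all_algebra.
From mathcomp Require Import zify.
Import Order.TTheory GRing.Theory Num.Theory.
Local Open Scope ring_scope.

Lemma coord_default (x : Zinf) j : (size (val x) <= j)%N -> Defs.coord x j = 0.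
Proof. by move=> le_xj; rewrite /Defs.coord nth_default. Qed.

Lemma size_Zinf_le (x y : Zinf) :
  (forall j, Defs.coord x j = Defs.coord y j) -> (size (val x) <= size (val y))%N.
Proof.
move=> exy; rewrite leqNgt; apply/negP => lt_yx.
have x_neq0 : (0 < size (val x))%N by apply: leq_ltn_trans lt_yx.
have := valP x; rewrite -(nth_last 1) (set_nth_default 0) ?prednK //.
move: (exy (size (val x)).-1); rewrite /Defs.coord => ->.
by rewrite nth_default ?eqxx // -ltnS prednK.
Qed.

Lemma Zinf_coord_inj (x y : Zinf) : (forall j, Defs.coord x j = Defs.coord y j) -> x = y.
Proof.
move=> exy; apply: val_inj.
have size_xy : size (val x) = size (val y).
  by apply/eqP; rewrite eqn_leq !size_Zinf_le.
by apply: (eq_from_nth (x0 := 0)) => // j _; apply: exy.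
Qed.

Section WeightedDistance.

Variable w : nat -> int.
Hypothesis w_ge0 : forall j, 0 <= w j.

Lemma dw_widen (x y : Zinf) N :
  (maxn (size (val x)) (size (val y)) <= N)%N ->
  dw w x y = \sum_(j < N) w j * `|Defs.coord x j - Defs.coord y j|.
Proof.
move=> le_N; pose F j := w j * `|Defs.coord x j - Defs.coord y j|.
rewrite /dw -!(big_mkord xpredT F) (big_cat_nat (leq0n _) le_N) /=.
rewrite [X in _ = _ + X]big_nat_cond [X in _ = _ + X]big1 ?addr0 //.
move=> j /andP[/andP[le_j _] _].
rewrite /F !coord_default ?subrr ?normr0 ?mulr0 //; apply: leq_trans le_j.
  exact: leq_maxr.
exact: leq_maxl.
Qed.

Lemma dw_sym (x y : Zinf) : dw w x y = dw w y x.
Proof. by rewrite /dw maxnC; apply: eq_bigr => j _; rewrite distrC. Qed.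

Lemma dw_ge_term (x y : Zinf) j :
  w j * `|Defs.coord x j - Defs.coord y j| <= dw w x y.
Proof.
set N := maxn (maxn (size (val x)) (size (val y))) j.+1.
have lt_jN : (j < N)%N by apply: leq_maxr.
rewrite (@dw_widen x y N) ?leq_maxl // (bigD1 (Ordinal lt_jN)) //= lerDl.
by apply: sumr_ge0 => i _; apply: mulr_ge0.
Qed.

Lemma dw_triangle (x y z : Zinf) : dw w x z <= dw w x y + dw w y z.
Proof.
set N := maxn (maxn (size (val x)) (size (val y))) (size (val z)).
rewrite (@dw_widen x z N) ?(@dw_widen x y N) ?(@dw_widen y z N) /N; try lia.
rewrite -big_split /=; apply: ler_sum => j _; rewrite -mulrDr ler_wpM2l //.
by rewrite -[X in `|X|](subrKA (Defs.coord y j)) ler_normD.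
Qed.

End WeightedDistance.

Lemma d1_ge_coord (p y : Zinf) i :
  (i.+1)%:Z * `|Defs.coord y i - Defs.coord p i| <= d1 p y.
Proof. by rewrite distrC; exact: dw_ge_term. Qed.

Section D1Ball.

Variables (p : Zinf) (s : nat).

Lemma d1_ball_coord_near {y : Zinf} i :
  d1 p y <= s%:Z -> `|Defs.coord y i - Defs.coord p i| <= s%:Z.
Proof.
move=> le_ys; apply: le_trans (le_trans (d1_ge_coord p y i) le_ys).
by rewrite -[X in X <= _]mul1r ler_wpM2r.
Qed.

Lemma d1_ball_coord_far {y : Zinf} i :
  d1 p y <= s%:Z -> (s <= i)%N -> Defs.coord y i = Defs.coord p i.
Proof.
move=> le_ys le_si; have := le_trans (d1_ge_coord p y i) le_ys; nia.
Qed.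

Definition d1_ball_code (y : Zinf) : {ffun 'I_s -> 'I_(s + s).+1} :=
  [ffun i : 'I_s => inord (absz (Defs.coord y i - Defs.coord p i + s%:Z))].

Lemma d1_ball_code_inj (y z : Zinf) :
  d1 p y <= s%:Z -> d1 p z <= s%:Z -> d1_ball_code y = d1_ball_code z -> y = z.
Proof.
move=> le_ys le_zs eq_code; apply: Zinf_coord_inj => i.
have [lt_is | le_si] := ltnP i s; last by rewrite !d1_ball_coord_far.
have near_y := d1_ball_coord_near i le_ys.
have near_z := d1_ball_coord_near i le_zs.
have := congr1 (fun c : {ffun _ -> _} => nat_of_ord (c (Ordinal lt_is))) eq_code.
by rewrite /= !ffunE /= !inordK; lia.
Qed.

Lemma d1_ball_collision (u : nat -> Zinf) :
  (forall j, d1 p (u j) <= s%:Z) -> exists j k, j != k /\ u j = u k.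
Proof.
move=> u_ball; pose K := #|{ffun 'I_s -> 'I_(s + s).+1}|.+1.
have : ~~ injectiveb (fun j : 'I_K => d1_ball_code (u j)).
  by apply/injectiveP => /leq_card; rewrite card_ord ltnn.
case/injectivePn => j [k ne_jk eq_code]; exists (val j), (val k); split=> //.
exact: d1_ball_code_inj.
Qed.

End D1Ball.

Definition Zinf0 : Zinf := exist _ [::] (oner_neq0 int).

Fact spike_key (n j : nat) : last 1 (rcons (nseq j 0) n.+1%:Z) != 0.
Proof. by rewrite last_rcons. Qed.

(* [spike n j] is (n + 1) e_j; the height is a successor so that the list has
   no trailing zero. *)
Definition spike (n j : nat) : Zinf := exist (fun s => last 1 s != 0) _ (spike_key n j).

Lemma coord_spike n j i : Defs.coord (spike n j) i = if i == j then n.+1%:Z else 0.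
Proof.
rewrite /Defs.coord /= nth_rcons size_nseq.
by case: ltngtP => [lt_ij | // | //]; rewrite nth_nseq lt_ij.
Qed.

Lemma d2_Zinf0_spike n j : d2 Zinf0 (spike n j) = n.+1%:Z.
Proof.
rewrite /d2 (@dw_widen w2 _ _ j.+1) /= ?size_rcons ?size_nseq //.
rewrite big_ord_recr /= big1 ?add0r => [|i _].
  by rewrite coord_spike eqxx /Defs.coord nth_nil /w2 mul1r sub0r normrN.
by rewrite coord_spike (ltn_eqF (ltn_ord i)) /Defs.coord nth_nil subrr mulr0.
Qed.

Lemma d2_spike_ge n {j k} : j != k -> n.+1%:Z <= d2 (spike n j) (spike n k).
Proof.
move=> ne_jk; have := @dw_ge_term w2 (fun=> ler01) (spike n j) (spike n k) j.
by rewrite !coord_spike eqxx (negbTE ne_jk) /w2 mul1r subr0.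
Qed.

Lemma expansive_d2_d1_spike_collision {g : Zinf -> Zinf} n :
  uniformly_expansive d2 d1 g ->
  exists j k, j != k /\ g (spike n j) = g (spike n k).
Proof.
move=> /(_ n.+1%:Z) [S g_exp].
apply: (@d1_ball_collision (g Zinf0) `|S|%N) => j.
by rewrite (le_trans (g_exp _ _ _)) ?d2_Zinf0_spike // abszE ler_norm.
Qed.

Theorem proposition7p3p4 :
  ~ exists (f : Zinf -> Zinf) (g : Zinf -> Zinf),
      [/\ coarse d1 d2 f, coarse d2 d1 g,
          close d1 (fun x => g (f x)) (fun x => x)
        & close d2 (fun y => f (g y)) (fun y => y)].
Proof.
move=> [f [g [_ [g_exp _] _ [C fg_close]]]].
set n := (`|C| + `|C|)%N.
have [j [k [ne_jk eq_g]]] := expansive_d2_d1_spike_collision n g_exp.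
have close_j := fg_close (spike n j); rewrite /d2 dw_sym eq_g in close_j.
have close_k := fg_close (spike n k).
have tri := @dw_triangle w2 (fun=> ler01) (spike n j) (f (g (spike n k))) (spike n k).
have := le_trans (d2_spike_ge n ne_jk) (le_trans tri (lerD close_j close_k)).
by rewrite /n; lia.
Qed.
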